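(* If $F$ is a balanced wiring, then $\mathrm{Comp}(F)$ is a separating space for $F$: (i) for every $\mathbf u\in\mathrm{Comp}(F)$, $F\mathbf u\subseteq\mathrm{Comp}(F)$; and (ii) for every $n$, if $F^n\mathbf u=0$ for all $\mathbf u\in\mathrm{Comp}(F)$ then $F^n=0$.
   Context: Terms: first-order terms built from an infinite set of variables, a binary function symbol $\bullet$ written infix, infinitely many constant symbols including a distinguished constant $\star$, and for each $n\ge1$ at least one $n$-ary function symbol. $\mathrm{var}(t)$ is the set of variables of $t$; $t$ is closed if $\mathrm{var}(t)=\emptyset$. The height $h(t)$ is the maximal distance from the root to a node in the tree of $t$; the height of an occurrence of a variable in $t$ is its distance from the root. A flow is a pair of terms written $t\leftarrow u$ with $\mathrm{var}(t)\subseteq\mathrm{var}(u)$, considered up to renaming. A fact is a flow $t\leftarrow\star$ (so $t$ is closed). The product of flows $u\leftarrow v$ and $t\leftarrow w$ (representatives chosen with disjoint variable sets) is defined iff $v$ and $t$ are unifiable, and then equals $u\theta\leftarrow w\theta$ with $\theta$ a most general unifier of $v,t$. A wiring is a finite set of flows, written as a formal sum, with $0$ the empty wiring; product $FG=\{fg: f\in F,g\in G, fg\text{ defined}\}$, $F^n$ the $n$-fold product. For a fact $\mathbf u$, $F\mathbf u$ denotes $F\{\mathbf u\}$ (a set of facts). A flow $t\leftarrow u$ is balanced if for every variable $x$, all occurrences of $x$ in $t$ and in $u$ have the same height; a wiring is balanced if all its flows are. The height of a flow $t\leftarrow u$ is $\max\{h(t),h(u)\}$; the height $h(F)$ of a wiring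 is the maximal height of its flows. For a balanced wiring $F$, its computation space $\mathrm{Comp}(F)$ is the set of facts $t\leftarrow\star$ with $h(t)\le h(F)$ and $t$ built using only symbols occurring in $F$ and the constant $\star$. A separating space for a wiring $F$ is a set of facts $\mathbf S$ such that $F\mathbf u\subseteq\mathbf S$ for all $\mathbf u\in\mathbf S$, and such that, for every $n$, $F^n\mathbf u=0$ for all $\mathbf u\in\mathbf S$ implies $F^n=0$. *)

From Stdlib Require Import Arith List.
Import ListNotations.

(* This provides
   infinitely many constants (arity 0), including the distinguished star
   (name 0, arity 0), the binary symbol "bullet" (name 0, arity 2), and
   infinitely many symbols of every arity n >= 1. *)
Record symb : Type := Symb { sname : nat; sarity : nat }.

Definition star_sym : symb := Symb 0 0.
Definition dot_sym : symb := Symb 0 2.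

Inductive term : Type :=
| Var : nat -> term
| Fn : symb -> list term -> term.

Definition Star : term := Fn star_sym [].
Definition Dot (a b : term) : term := Fn dot_sym [a; b].

Fixpoint wf (t : term) : Prop :=
  match t with
  | Var _ => True
  | Fn f args =>
      length args = sarity f /\
      (fix wfl (l : list term) : Prop :=
         match l with [] => True | a :: l' => wf a /\ wfl l' end) args
  end.

Fixpoint vars (t : term) : list nat :=
  match t with
  | Var x => [x]
  | Fn _ args => flat_map vars args
  end.

Definition closed (t : term) : Prop := vars t = [].

Fixpoint syms (t : term) : list symb :=
  match t with
  | Var _ => []
  | Fn f args => f :: flat_map syms args
  end.

Fixpoint height (t : term) : nat :=
  match t with
  | Var _ => 0
  | Fn _ args => fold_right (fun a m => Nat.max (S (height a)) m) 0 args
  end.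

Fixpoint occ (d : nat) (t : term) : list (nat * nat) :=
  match t with
  | Var x => [(x, d)]
  | Fn _ args => flat_map (occ (S d)) args
  end.

Fixpoint subst (s : nat -> term) (t : term) : term :=
  match t with
  | Var x => s x
  | Fn f args => Fn f (map (subst s) args)
  end.

Definition unifier (th : nat -> term) (a b : term) : Prop :=
  subst th a = subst th b.

Definition mgu (th : nat -> term) (a b : term) : Prop :=
  unifier th a b /\
  forall sg, unifier sg a b ->
    exists rho, forall x, sg x = subst rho (th x).

(* A flow  t <- u  is represented by the pair (t, u). *)
Definition flow : Type := (term * term)%type.

Definition is_flow (f : flow) : Prop :=
  wf (fst f) /\ wf (snd f) /\ incl (vars (fst f)) (vars (snd f)).

Definition flow_vars (f : flow) : list nat := vars (fst f) ++ vars (snd f).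

(* Flows are considered up to renaming of variables. *)
Definition rename (p : nat -> nat) (f : flow) : flow :=
  (subst (fun x => Var (p x)) (fst f), subst (fun x => Var (p x)) (snd f)).

Definition flow_equiv (f g : flow) : Prop :=
  exists p : nat -> nat, (forall x y, p x = p y -> x = y) /\ g = rename p f.

(* r is (a representative of) the product f g, which is defined iff
   such an r exists: (u <- v)(t <- w) = u th <- w th, th an mgu of v, t,
   representatives chosen with disjoint variables. *)
Definition product (f g r : flow) : Prop :=
  exists f' g' th,
    flow_equiv f f' /\ flow_equiv g g' /\
    (forall x, In x (flow_vars f') -> ~ In x (flow_vars g')) /\
    mgu th (snd f') (fst g') /\
    flow_equiv (subst th (fst f'), subst th (snd g')) r.

(* A wiring: a finite set of flows, given by a list. *)
Definition wiring : Type := list flow.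

Definition is_wiring (F : wiring) : Prop := forall f, In f F -> is_flow f.

Definition in_wiring (F : wiring) (g : flow) : Prop :=
  exists f, In f F /\ flow_equiv f g.

Definition id_flow : flow := (Var 0, Var 0).

Fixpoint in_pow (F : wiring) (n : nat) (g : flow) : Prop :=
  match n with
  | 0 => flow_equiv id_flow g
  | S m => exists f h, in_wiring F f /\ in_pow F m h /\ product f h g
  end.

Definition fact_of (t : term) : flow := (t, Star).

Definition in_app (F : wiring) (u : term) (r : flow) : Prop :=
  exists f, in_wiring F f /\ product f (fact_of u) r.

Definition in_pow_app (F : wiring) (n : nat) (u : term) (r : flow) : Prop :=
  exists g, in_pow F n g /\ product g (fact_of u) r.

Definition balanced_flow (f : flow) : Prop :=
  forall x d1 d2,
    In (x, d1) (occ 0 (fst f) ++ occ 0 (snd f)) ->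
    In (x, d2) (occ 0 (fst f) ++ occ 0 (snd f)) -> d1 = d2.

Definition balanced (F : wiring) : Prop := forall f, In f F -> balanced_flow f.

Definition flow_height (f : flow) : nat := Nat.max (height (fst f)) (height (snd f)).

Definition wiring_height (F : wiring) : nat :=
  fold_right (fun f m => Nat.max (flow_height f) m) 0 F.

Definition wiring_syms (F : wiring) : list symb :=
  flat_map (fun f => syms (fst f) ++ syms (snd f)) F.

(* Comp(F): the fact_of t <- star belongs to Comp(F) iff in_comp F t *)
Definition in_comp (F : wiring) (t : term) : Prop :=
  wf t /\ closed t /\ height t <= wiring_height F /\
  (forall s, In s (syms t) -> s = star_sym \/ In s (wiring_syms F)).

(* Every flow in a power F^n is balanced, well formed, of height at most h(F)
   and built from the symbols of F.  The point is that this survives products: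
   for two such flows with disjoint variables, balance gives each variable x a
   single depth D x, and truncating θ x at depth h(F) - D x, or replacing each
   variable occurrence in θ x by its depth, gives two more unifiers.  Being
   instances of the mgu θ, they force θ x to have height at most h(F) - D x and
   each variable of θ x to occur at one depth only.  So a nonzero F^n contains a
   bounded flow t <- u, and grounding u with ⋆ gives a fact of Comp(F) it
   applies to, which is (ii); (i) is the same height count for one flow against
   a closed fact. *)
From Stdlib Require Import Arith List Lia.
Import ListNotations.

Fixpoint term_ind_nested (P : term -> Prop) (HVar : forall x, P (Var x))
  (HFn : forall f l, Forall P l -> P (Fn f l)) (t : term) : P t :=
  match t with
  | Var x => HVar x
  | Fn f l => HFn f l ((fix go (l : list term) : Forall P l :=
       match l with
       | [] => Forall_nil _
       | a :: l' => Forall_cons _ (term_ind_nested P HVar HFn a) (go l')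
       end) l)
  end.

Lemma wf_Fn f l : wf (Fn f l) <-> length l = sarity f /\ Forall wf l.
Proof.
  simpl. split; intros [Hlen Hargs]; split; auto; clear Hlen.
  - induction l; simpl in *; auto. destruct Hargs; constructor; auto.
  - induction l; simpl in *; auto. inversion Hargs; subst; split; auto.
    apply IHl; auto.
Qed.

Lemma height_Fn_le f l k :
  height (Fn f l) <= k <-> Forall (fun a => height a < k) l.
Proof.
  induction l as [|a l IH]; split; intro H.
  - constructor.
  - simpl; lia.
  - change (Nat.max (S (height a)) (height (Fn f l)) <= k) in H.
    apply Nat.max_lub_iff in H as [Ha Hl]. constructor; [lia | apply IH; auto].
  - change (Nat.max (S (height a)) (height (Fn f l)) <= k).
    inversion H; subst. apply Nat.max_lub; [lia | apply IH; auto].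
Qed.

Lemma height_arg_lt f l a : In a l -> height a < height (Fn f l).
Proof.
  intro Ha. pose proof (proj1 (height_Fn_le f l _) (le_n _)) as H.
  rewrite Forall_forall in H. auto.
Qed.

Lemma in_occ_vars t d x e : In (x, e) (occ d t) -> In x (vars t).
Proof.
  revert t d; refine (term_ind_nested _ _ _); simpl; intros.
  - destruct H as [H|[]]; injection H; auto.
  - apply in_flat_map in H0 as [a [Ha Hx]]. rewrite Forall_forall in H.
    apply in_flat_map; eauto.
Qed.

Lemma in_vars_occ t d x : In x (vars t) -> exists e, In (x, e) (occ d t).
Proof.
  revert t d; refine (term_ind_nested _ _ _); simpl; intros.
  - destruct H as [<-|[]]; eauto.
  - apply in_flat_map in H0 as [a [Ha Hx]]. rewrite Forall_forall in H.
    destruct (H a Ha (S d) Hx) as [e He]. exists e. apply in_flat_map; eauto.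
Qed.

Lemma occ_depth_le t d x e : In (x, e) (occ d t) -> e <= d + height t.
Proof.
  revert t d; refine (term_ind_nested _ _ _); simpl; intros.
  - destruct H as [H|[]]; injection H; intros; lia.
  - apply in_flat_map in H0 as [a [Ha Hx]]. rewrite Forall_forall in H.
    specialize (H a Ha _ Hx). pose proof (height_arg_lt f l a Ha). simpl in *. lia.
Qed.

Lemma subst_ext_in s1 s2 t :
  (forall x, In x (vars t) -> s1 x = s2 x) -> subst s1 t = subst s2 t.
Proof.
  revert t; refine (term_ind_nested _ _ _); simpl; intros; auto.
  f_equal. apply map_ext_in. intros a Ha. rewrite Forall_forall in H.
  apply H; auto. intros x Hx; apply H0, in_flat_map; eauto.
Qed.

Lemma subst_ext_in_inv s1 s2 t :
  subst s1 t = subst s2 t -> forall x, In x (vars t) -> s1 x = s2 x.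
Proof.
  revert t; refine (term_ind_nested _ _ _); simpl; intros.
  - destruct H0 as [<-|[]]; auto.
  - injection H0; intro E. apply in_flat_map in H1 as [a [Ha Hx]].
    rewrite Forall_forall in H. eapply H; eauto. eapply map_ext_in_iff in E; eauto.
Qed.

Lemma subst_Var t : subst Var t = t.
Proof.
  revert t; refine (term_ind_nested _ _ _); simpl; intros; auto.
  f_equal. rewrite Forall_forall in H. rewrite <- (map_id l) at 2. apply map_ext_in; auto.
Qed.

Lemma subst_comp s1 s2 t : subst s1 (subst s2 t) = subst (fun x => subst s1 (s2 x)) t.
Proof.
  revert t; refine (term_ind_nested _ _ _); simpl; intros; auto.
  f_equal. rewrite map_map. rewrite Forall_forall in H. apply map_ext_in; auto.
Qed.

Lemma subst_closed s t : closed t -> subst s t = t.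
Proof.
  intro H. rewrite <- (subst_Var t) at 2. apply subst_ext_in. rewrite H; simpl; tauto.
Qed.

Lemma in_occ_subst th t d y k : In (y, k) (occ d (subst th t)) <->
  exists x e, In (x, e) (occ d t) /\ In (y, k) (occ e (th x)).
Proof.
  revert t d; refine (term_ind_nested _ _ _); simpl; intros.
  - split; [intro; exists x, d; auto|].
    intros [x' [e [[H1|[]] H2]]]; injection H1; intros; subst; auto.
  - rewrite Forall_forall in H.
    rewrite flat_map_concat_map, map_map, <- flat_map_concat_map. split.
    + intro H0. apply in_flat_map in H0 as [a [Ha Hy]].
      apply H in Hy as [x [e [H1 H2]]]; auto.
      exists x, e; split; auto. apply in_flat_map; eauto.
    + intros [x [e [H1 H2]]]. apply in_flat_map in H1 as [a [Ha Hx]].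
      apply in_flat_map. exists a; split; auto. apply H; eauto.
Qed.

Lemma in_vars_subst th t y :
  In y (vars (subst th t)) <-> exists x, In x (vars t) /\ In y (vars (th x)).
Proof.
  split.
  - intro H. destruct (in_vars_occ _ 0 _ H) as [k Hk].
    apply in_occ_subst in Hk as [x [e [H1 H2]]].
    exists x; split; eapply in_occ_vars; eauto.
  - intros [x [H1 H2]]. destruct (in_vars_occ _ 0 _ H1) as [e He].
    destruct (in_vars_occ _ e _ H2) as [k Hk].
    eapply in_occ_vars. apply in_occ_subst. eauto.
Qed.

Lemma in_syms_subst th t s : In s (syms (subst th t)) <->
  In s (syms t) \/ exists x, In x (vars t) /\ In s (syms (th x)).
Proof.
  revert t; refine (term_ind_nested _ _ _); simpl; intros.
  - split; [eauto | intros [[]|[x' [[<-|[]] H]]]; auto].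
  - rewrite Forall_forall in H.
    rewrite flat_map_concat_map, map_map, <- flat_map_concat_map. split.
    + intros [<-|H0]; auto. apply in_flat_map in H0 as [a [Ha Hs]].
      apply H in Hs as [Hs|[x [H1 H2]]]; auto.
      * left; right; apply in_flat_map; eauto.
      * right; exists x; split; auto; apply in_flat_map; eauto.
    + intros [[<-|H0]|[x [H1 H2]]]; auto.
      * apply in_flat_map in H0 as [a [Ha Hs]]. right.
        apply in_flat_map. exists a; split; auto; apply H; auto.
      * apply in_flat_map in H1 as [a [Ha Hx]]. right.
        apply in_flat_map. exists a; split; auto; apply H; eauto.
Qed.

Lemma wf_subst th t :
  wf t -> (forall x, In x (vars t) -> wf (th x)) -> wf (subst th t).
Proof.
  revert t; refine (term_ind_nested _ _ _); intros.
  - apply H0; simpl; auto.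
  - apply wf_Fn in H0 as [Hlen Hargs]. change (wf (Fn f (map (subst th) l))).
    apply wf_Fn. rewrite length_map. split; auto.
    rewrite Forall_forall in *. intros b Hb. apply in_map_iff in Hb as [a [<- Ha]].
    apply H; auto. intros; apply H1. simpl. apply in_flat_map; eauto.
Qed.

Lemma wf_subst_inv th t :
  wf (subst th t) -> wf t /\ (forall x, In x (vars t) -> wf (th x)).
Proof.
  revert t; refine (term_ind_nested _ _ _); intros.
  - split; [exact I|]. intros x' [<-|[]]; auto.
  - change (wf (Fn f (map (subst th) l))) in H0.
    apply wf_Fn in H0 as [Hlen Hargs]. rewrite length_map in Hlen.
    rewrite Forall_forall in *. split.
    + apply wf_Fn; split; auto. rewrite Forall_forall. intros a Ha.
      apply H; auto. apply Hargs, in_map; auto.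
    + intros x Hx. simpl in Hx. apply in_flat_map in Hx as [a [Ha Hx]].
      eapply H; eauto. apply Hargs, in_map; auto.
Qed.

Lemma height_subst_le th t d k : d + height t <= k ->
  (forall x e, In (x, e) (occ d t) -> e + height (th x) <= k) ->
  d + height (subst th t) <= k.
Proof.
  revert t d; refine (term_ind_nested _ _ _); intros.
  - specialize (H0 x d (or_introl eq_refl)). simpl; lia.
  - rename H into IH, H0 into Hh, H1 into Ho.
    change (d + height (Fn f (map (subst th) l)) <= k). rewrite Forall_forall in IH.
    enough (height (Fn f (map (subst th) l)) <= k - d) by lia.
    apply height_Fn_le. rewrite Forall_forall. intros b Hb.
    apply in_map_iff in Hb as [a [<- Ha]].
    enough (S d + height (subst th a) <= k) by lia. apply IH; auto.
    + pose proof (height_arg_lt f l a Ha). lia.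
    + intros; apply Ho. simpl. apply in_flat_map; eauto.
Qed.

Lemma height_subst_ge th t d x e :
  In (x, e) (occ d t) -> e + height (th x) <= d + height (subst th t).
Proof.
  revert t d; refine (term_ind_nested _ _ _); simpl; intros.
  - destruct H as [H|[]]; injection H; intros; subst; lia.
  - apply in_flat_map in H0 as [a [Ha Hx]]. rewrite Forall_forall in H.
    specialize (H a Ha _ Hx).
    pose proof (height_arg_lt f _ _ (in_map (subst th) _ _ Ha)). simpl in *. lia.
Qed.

Lemma height_le_subst th t : height t <= height (subst th t).
Proof.
  revert t; refine (term_ind_nested _ _ _); simpl; intros; [lia|].
  change (height (Fn f l) <= height (Fn f (map (subst th) l))).
  apply height_Fn_le. rewrite Forall_forall in *. intros a Ha.
  pose proof (height_arg_lt f _ _ (in_map (subst th) _ _ Ha)). specialize (H a Ha). lia.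
Qed.

Lemma height_rename p t : height (subst (fun x => Var (p x)) t) = height t.
Proof.
  apply Nat.le_antisymm; [|apply height_le_subst].
  apply (height_subst_le _ t 0); [lia|].
  intros x e He. apply occ_depth_le in He. simpl. lia.
Qed.

Lemma in_occ_rename p t d y e : In (y, e) (occ d (subst (fun x => Var (p x)) t)) ->
  exists x, y = p x /\ In (x, e) (occ d t).
Proof.
  intro H. apply in_occ_subst in H as [x [e' [H1 [H2|[]]]]].
  injection H2; intros; subst; eauto.
Qed.

Lemma in_vars_rename p t y :
  In y (vars (subst (fun x => Var (p x)) t)) <-> exists x, y = p x /\ In x (vars t).
Proof.
  rewrite in_vars_subst. split; intros [x [H1 H2]]; exists x.
  - destruct H2 as [<-|[]]; auto.
  - subst; simpl; auto.
Qed.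

Definition bounded_term (Sy : list symb) (k : nat) (t : term) : Prop :=
  wf t /\ height t <= k /\ incl (syms t) Sy.

Definition bounded_balanced_flow (Sy : list symb) (k : nat) (g : flow) : Prop :=
  balanced_flow g /\ bounded_term Sy k (fst g) /\ bounded_term Sy k (snd g).

Lemma bounded_term_rename Sy k p t :
  bounded_term Sy k t -> bounded_term Sy k (subst (fun x => Var (p x)) t).
Proof.
  intros [Hwf [Hh Hs]]. split; [|split].
  - apply wf_subst; simpl; auto.
  - rewrite height_rename; auto.
  - intros s Hin. apply in_syms_subst in Hin as [Hin|[x [_ []]]]. auto.
Qed.

Lemma balanced_flow_rename p f :
  (forall x y, p x = p y -> x = y) -> balanced_flow f -> balanced_flow (rename p f).
Proof.
  intros Hp Hb y d1 d2 H1 H2.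
  assert (Hpre : forall d, In (y, d) (occ 0 (fst (rename p f)) ++ occ 0 (snd (rename p f))) ->
                 exists x, y = p x /\ In (x, d) (occ 0 (fst f) ++ occ 0 (snd f))).
  { intros d Hd. apply in_app_iff in Hd as [Hd|Hd]; apply in_occ_rename in Hd as [x [E Hx]];
      exists x; split; auto; apply in_app_iff; auto. }
  destruct (Hpre _ H1) as [x1 [E1 K1]], (Hpre _ H2) as [x2 [E2 K2]].
  rewrite E1 in E2. apply Hp in E2. subst. eapply Hb; eauto.
Qed.

Lemma bounded_balanced_flow_equiv Sy k f g :
  bounded_balanced_flow Sy k f -> flow_equiv f g -> bounded_balanced_flow Sy k g.
Proof.
  intros [Hb [Hfst Hsnd]] [p [Hp ->]].
  split; [apply balanced_flow_rename; auto|split; apply bounded_term_rename; auto].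
Qed.

Lemma flow_equiv_refl f : flow_equiv f f.
Proof.
  exists (fun x => x). split; auto. destruct f; unfold rename; simpl.
  change (fun x => Var x) with Var. rewrite !subst_Var; auto.
Qed.

Lemma flow_equiv_trans f g h : flow_equiv f g -> flow_equiv g h -> flow_equiv f h.
Proof.
  intros [p [Hp ->]] [q [Hq ->]]. exists (fun x => q (p x)). split; auto.
  unfold rename; simpl. rewrite !subst_comp. reflexivity.
Qed.

Lemma in_wiring_equiv F f g : in_wiring F f -> flow_equiv f g -> in_wiring F g.
Proof. intros [f0 [Hf0 E0]] E. exists f0. split; auto. eapply flow_equiv_trans; eauto. Qed.

Lemma flow_equiv_vars_incl f g : incl (vars (fst f)) (vars (snd f)) ->
  flow_equiv f g -> incl (vars (fst g)) (vars (snd g)).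
Proof.
  intros Hincl [p [_ ->]] y Hy. unfold rename in *; simpl in *.
  apply in_vars_rename in Hy as [x [-> Hx]]. apply in_vars_rename; eauto.
Qed.

Lemma rename_fact p t : closed t -> rename p (fact_of t) = fact_of t.
Proof. intro H. unfold rename, fact_of; simpl. rewrite subst_closed; auto. Qed.

Definition respects_depth (D : nat -> nat) (d : nat) (t : term) : Prop :=
  forall x e, In (x, e) (occ d t) -> D x = e.

Lemma respects_depth_Fn D d f l a :
  respects_depth D d (Fn f l) -> In a l -> respects_depth D (S d) a.
Proof. intros H Ha x e Hx. apply H. simpl. apply in_flat_map; eauto. Qed.

Definition symb_eq_dec (a b : symb) : {a = b} + {a <> b}.
Proof. decide equality; apply Nat.eq_dec. Defined.

Fixpoint trunc (Sy : list symb) (k : nat) (t : term) {struct t} : term :=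
  match t with
  | Var x => Var x
  | Fn f args =>
      if in_dec symb_eq_dec f Sy then
        if Nat.eq_dec (length args) (sarity f) then
          match args with
          | [] => Fn f []
          | _ :: _ => match k with 0 => Var 0 | S k' => Fn f (map (trunc Sy k') args) end
          end
        else Var 0
      else Var 0
  end.

Lemma bounded_term_Var Sy k x : bounded_term Sy k (Var x).
Proof. repeat split; simpl; try lia. intros a []. Qed.

Lemma trunc_bounded Sy k t : bounded_term Sy k (trunc Sy k t).
Proof.
  revert t k; refine (term_ind_nested _ _ _); intros; [apply bounded_term_Var|].
  simpl. destruct (in_dec symb_eq_dec f Sy) as [Hin|]; [|apply bounded_term_Var].
  destruct (Nat.eq_dec (length l) (sarity f)) as [Hl|]; [|apply bounded_term_Var].
  destruct l as [|b l'].
  - repeat split; simpl in *; auto; try lia. intros a [<-|[]]; auto.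
  - destruct k as [|k']; [apply bounded_term_Var|].
    rewrite Forall_forall in H. split; [|split].
    + apply wf_Fn. rewrite length_map. split; auto. rewrite Forall_forall.
      intros c Hc. apply in_map_iff in Hc as [a [<- Ha]]. apply (H a Ha k').
    + apply height_Fn_le. rewrite Forall_forall. intros c Hc.
      apply in_map_iff in Hc as [a [<- Ha]]. destruct (H a Ha k') as [_ [Hh _]]. lia.
    + intros s [<-|Hs]; auto. apply in_flat_map in Hs as [c [Hc Hs]].
      apply in_map_iff in Hc as [a [<- Ha]]. apply (H a Ha k'); auto.
Qed.

Lemma trunc_subst Sy th D k t d : wf t -> incl (syms t) Sy -> d + height t <= k ->
  respects_depth D d t ->
  trunc Sy (k - d) (subst th t) = subst (fun x => trunc Sy (k - D x) (th x)) t.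
Proof.
  revert t d; refine (term_ind_nested _ _ _); intros.
  - simpl. rewrite (H2 x d); simpl; auto.
  - rename H into IH. apply wf_Fn in H0 as [Hl Hw].
    assert (Hin : In f Sy) by (apply H1; simpl; auto).
    simpl. destruct (in_dec symb_eq_dec f Sy) as [_|C]; [|contradiction].
    rewrite length_map. destruct (Nat.eq_dec (length l) (sarity f)) as [_|C]; [|contradiction].
    destruct l as [|b l']; [reflexivity|].
    pose proof (height_arg_lt f _ b (in_eq b l')).
    destruct (k - d) as [|m] eqn:Ekd; [lia|].
    change (Fn f (map (trunc Sy m) (map (subst th) (b :: l'))) =
            Fn f (map (subst (fun x => trunc Sy (k - D x) (th x))) (b :: l'))).
    f_equal. rewrite map_map. apply map_ext_in. intros a Ha.
    rewrite Forall_forall in IH, Hw. replace m with (k - S d) by lia.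
    apply IH; auto.
    + intros s Hs. apply H1. right. apply in_flat_map; eauto.
    + pose proof (height_arg_lt f _ a Ha). lia.
    + eapply respects_depth_Fn; eauto.
Qed.

Fixpoint label_depths (d : nat) (t : term) : term :=
  match t with
  | Var _ => Var d
  | Fn f args => Fn f (map (label_depths (S d)) args)
  end.

Lemma label_depths_subst th D t d : respects_depth D d t ->
  label_depths d (subst th t) = subst (fun x => label_depths (D x) (th x)) t.
Proof.
  revert t d; refine (term_ind_nested _ _ _); intros.
  - simpl. rewrite (H x d); simpl; auto.
  - simpl. f_equal. rewrite map_map. apply map_ext_in. intros a Ha.
    rewrite Forall_forall in H. apply H; auto. eapply respects_depth_Fn; eauto.
Qed.

Lemma label_depths_instance rho t d : label_depths d t = subst rho t ->
  forall y e, In (y, e) (occ d t) -> rho y = Var e.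
Proof.
  revert t d; refine (term_ind_nested _ _ _); simpl; intros.
  - destruct H0 as [H0|[]]. injection H0; intros; subst; auto.
  - injection H0; intro E. apply in_flat_map in H1 as [a [Ha Hy]].
    rewrite Forall_forall in H. eapply H; eauto. eapply map_ext_in_iff in E; eauto.
Qed.

Section MguOfBalancedTerms.

Variables (Sy : list symb) (k : nat) (D : nat -> nat) (th : nat -> term) (v t : term).
Hypothesis th_mgu : mgu th v t.
Hypotheses (v_bounded : bounded_term Sy k v) (t_bounded : bounded_term Sy k t).
Hypotheses (v_depths : respects_depth D 0 v) (t_depths : respects_depth D 0 t).

Lemma mgu_bounded x : bounded_term Sy (k - D x) (th x).
Proof.
  destruct th_mgu as [Hu Hgen], v_bounded as [wv [hv sv]], t_bounded as [wt [ht st]].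
  destruct (Hgen (fun x => trunc Sy (k - D x) (th x))) as [rho Hrho].
  { unfold unifier.
    rewrite <- (trunc_subst Sy th D k v 0), <- (trunc_subst Sy th D k t 0); auto.
    rewrite Hu; auto. }
  destruct (trunc_bounded Sy (k - D x) (th x)) as [Hw [Hh Hs]].
  rewrite Hrho in Hw, Hh, Hs. split; [|split].
  - apply (wf_subst_inv rho); auto.
  - pose proof (height_le_subst rho (th x)). lia.
  - intros s Hin. apply Hs, in_syms_subst. auto.
Qed.

Lemma mgu_depth_labels :
  exists rho, forall x y e, In (y, e) (occ (D x) (th x)) -> rho y = Var e.
Proof.
  destruct th_mgu as [Hu Hgen].
  destruct (Hgen (fun x => label_depths (D x) (th x))) as [rho Hrho].
  { unfold unifier.
    rewrite <- (label_depths_subst th D v 0), <- (label_depths_subst th D t 0); auto.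
    rewrite Hu; auto. }
  exists rho. intro x. apply label_depths_instance. auto.
Qed.

Lemma subst_mgu_bounded c : respects_depth D 0 c -> bounded_term Sy k c ->
  bounded_term Sy k (subst th c).
Proof.
  intros Dc [wc [hc sc]]. split; [|split].
  - apply wf_subst; auto. intros x _. apply mgu_bounded.
  - apply (height_subst_le th c 0); [lia|]. intros x e He.
    destruct (mgu_bounded x) as [_ [Hh _]].
    pose proof (occ_depth_le _ _ _ _ He). rewrite (Dc x e He) in Hh. lia.
  - intros s Hs. apply in_syms_subst in Hs as [Hs|[x [_ Hs]]]; auto.
    apply (mgu_bounded x); auto.
Qed.

Lemma subst_mgu_balanced a w : respects_depth D 0 a -> respects_depth D 0 w ->
  balanced_flow (subst th a, subst th w).
Proof.
  intros Da Dw. destruct mgu_depth_labels as [rho Hrho].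
  assert (Hocc : forall c, respects_depth D 0 c ->
            forall y j, In (y, j) (occ 0 (subst th c)) -> rho y = Var j).
  { intros c Dc y j Hy. apply in_occ_subst in Hy as [x [e [H1 H2]]].
    rewrite <- (Dc x e H1) in H2. eauto. }
  intros y j1 j2 K1 K2. simpl in K1, K2. apply in_app_iff in K1, K2.
  assert (E1 : rho y = Var j1) by (destruct K1; eauto).
  assert (E2 : rho y = Var j2) by (destruct K2; eauto).
  congruence.
Qed.

End MguOfBalancedTerms.

Lemma list_graph_function (L : list (nat * nat)) :
  (forall x d1 d2, In (x, d1) L -> In (x, d2) L -> d1 = d2) ->
  exists D : nat -> nat, forall x e, In (x, e) L -> D x = e.
Proof.
  intro Hfun.
  exists (fun x => match find (fun q => Nat.eqb (fst q) x) L with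
                | Some q => snd q | None => 0 end).
  intros x e He. destruct (find (fun q => Nat.eqb (fst q) x) L) as [[x' e']|] eqn:E.
  - apply find_some in E as [E1 E2]. simpl in E2. apply Nat.eqb_eq in E2. subst x'.
    eapply Hfun; eauto.
  - eapply find_none in E; eauto. simpl in E. rewrite Nat.eqb_refl in E. discriminate.
Qed.

Lemma disjoint_balanced_depths f h : balanced_flow f -> balanced_flow h ->
  (forall x, In x (flow_vars f) -> ~ In x (flow_vars h)) ->
  exists D, respects_depth D 0 (fst f) /\ respects_depth D 0 (snd f) /\
            respects_depth D 0 (fst h) /\ respects_depth D 0 (snd h).
Proof.
  intros Bf Bh Hdisj.
  assert (Hvars : forall g x e, In (x, e) (occ 0 (fst g) ++ occ 0 (snd g)) -> In x (flow_vars g)).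
  { intros g x e Hx. unfold flow_vars. apply in_app_iff in Hx as [Hx|Hx];
      apply in_app_iff; eauto using in_occ_vars. }
  destruct (list_graph_function ((occ 0 (fst f) ++ occ 0 (snd f)) ++ (occ 0 (fst h) ++ occ 0 (snd h))))
    as [D HD].
  { intros x d1 d2 H1 H2. apply in_app_iff in H1, H2.
    destruct H1 as [H1|H1], H2 as [H2|H2].
    - eapply Bf; eauto.
    - exfalso. apply (Hdisj x); [eapply (Hvars f) | eapply (Hvars h)]; eauto.
    - exfalso. apply (Hdisj x); [eapply (Hvars f) | eapply (Hvars h)]; eauto.
    - eapply Bh; eauto. }
  exists D. repeat split; intros x e Hx; apply HD; rewrite !in_app_iff; tauto.
Qed.

Lemma product_bounded_balanced Sy k f h r :
  bounded_balanced_flow Sy k f -> bounded_balanced_flow Sy k h -> product f h r ->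
  bounded_balanced_flow Sy k r.
Proof.
  intros Hf Hh [f' [h' [th [Ef [Eh [Hdisj [Hmgu Er]]]]]]].
  apply (bounded_balanced_flow_equiv _ _ _ _ Hf) in Ef.
  apply (bounded_balanced_flow_equiv _ _ _ _ Hh) in Eh.
  eapply bounded_balanced_flow_equiv; [|exact Er].
  destruct (disjoint_balanced_depths f' h' (proj1 Ef) (proj1 Eh) Hdisj) as [D [Da [Dv [Dt Dw]]]].
  destruct f' as [a v], h' as [t w], Ef as [_ [Ba Bv]], Eh as [_ [Bt Bw]]; simpl in *.
  split; [|split]; simpl.
  - apply (subst_mgu_balanced D th v t); auto.
  - apply (subst_mgu_bounded Sy k D th v t); auto.
  - apply (subst_mgu_bounded Sy k D th v t); auto.
Qed.

Lemma wiring_flow_bounded_balanced F f : is_wiring F -> balanced F -> In f F ->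
  bounded_balanced_flow (wiring_syms F) (wiring_height F) f.
Proof.
  intros Hw Hb Hf. destruct (Hw f Hf) as [w1 [w2 _]].
  assert (Hh : flow_height f <= wiring_height F).
  { clear -Hf. induction F as [|g F IH]; simpl in *; [contradiction|].
    destruct Hf as [->|Hf]; [lia|]. specialize (IH Hf). lia. }
  assert (Hs : incl (syms (fst f) ++ syms (snd f)) (wiring_syms F)).
  { intros s Hs. apply in_flat_map. eauto. }
  apply incl_app_inv in Hs as [Hs1 Hs2]. unfold flow_height in Hh.
  repeat split; auto; lia.
Qed.

Lemma in_wiring_bounded_balanced F f : is_wiring F -> balanced F -> in_wiring F f ->
  bounded_balanced_flow (wiring_syms F) (wiring_height F) f.
Proof.
  intros Hw Hb [g [Hg E]]. eapply bounded_balanced_flow_equiv; eauto.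
  apply wiring_flow_bounded_balanced; auto.
Qed.

Lemma id_flow_bounded_balanced Sy k : bounded_balanced_flow Sy k id_flow.
Proof.
  split; [|split; apply bounded_term_Var].
  intros x d1 d2 [K1|[K1|[]]] [K2|[K2|[]]]; congruence.
Qed.

Lemma in_pow_bounded_balanced F n g : is_wiring F -> balanced F -> in_pow F n g ->
  bounded_balanced_flow (wiring_syms F) (wiring_height F) g.
Proof.
  intros Hw Hb. revert g. induction n as [|n IH]; simpl; intros g Hg.
  - eapply bounded_balanced_flow_equiv; eauto. apply id_flow_bounded_balanced.
  - destruct Hg as [f [h [Hf [Hh Hr]]]].
    apply (product_bounded_balanced _ _ f h g); auto.
    apply in_wiring_bounded_balanced; auto.
Qed.

Section InstanceOfClosedSource.

Variables (th : nat -> term) (a v : term).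
Hypothesis vars_a_v : incl (vars a) (vars v).

Lemma closed_subst_incl : closed (subst th v) -> closed (subst th a).
Proof.
  intro Hv. unfold closed. destruct (vars (subst th a)) as [|y l] eqn:E; auto. exfalso.
  assert (Hy : In y (vars (subst th a))) by (rewrite E; left; auto).
  apply in_vars_subst in Hy as [x [Hx Hy]].
  assert (Hy' : In y (vars (subst th v))) by (apply in_vars_subst; eauto).
  rewrite Hv in Hy'. contradiction.
Qed.

Lemma wf_subst_incl : wf a -> wf (subst th v) -> wf (subst th a).
Proof.
  intros Ha Hv. apply wf_subst; auto. intros x Hx. apply (wf_subst_inv th v); auto.
Qed.

Lemma syms_subst_incl s :
  In s (syms (subst th a)) -> In s (syms a) \/ In s (syms (subst th v)).
Proof.
  intro Hs. apply in_syms_subst in Hs as [Hs|[x [Hx Hs]]]; auto.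
  right. apply in_syms_subst. eauto.
Qed.

(* Balance puts each variable of [a] at the same depth in [v], so its image
   under [th] fits below [height (subst th v)]. *)
Lemma height_subst_balanced k : balanced_flow (a, v) ->
  height a <= k -> height (subst th v) <= k -> height (subst th a) <= k.
Proof.
  intros Hb Ha Hv. apply (height_subst_le th a 0); [lia|]. intros x e He.
  destruct (in_vars_occ v 0 x (vars_a_v x (in_occ_vars _ _ _ _ He))) as [e' He'].
  assert (e = e') by (eapply Hb; apply in_app_iff; eauto). subst e'.
  pose proof (height_subst_ge th v 0 x e He'). lia.
Qed.

End InstanceOfClosedSource.

Lemma app_in_comp F u r : is_wiring F -> balanced F ->
  in_comp F u -> in_app F u r -> exists t, r = fact_of t /\ in_comp F t.
Proof.
  intros Hw Hb [wu [cu [hu su]]] [f [Hf [f' [g' [th [Ef [Eg [_ [[Hu _] Er]]]]]]]]].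
  apply (in_wiring_equiv F f f') in Hf; auto.
  destruct (in_wiring_bounded_balanced F f' Hw Hb Hf) as [Bf [[wa [ha sa]] _]].
  assert (Hincl : incl (vars (fst f')) (vars (snd f'))).
  { destruct Hf as [f0 [Hf0 E0]]. apply (flow_equiv_vars_incl f0); auto. apply (Hw f0 Hf0). }
  destruct Eg as [q [_ Eg]]. rewrite rename_fact in Eg; auto. subst g'.
  destruct f' as [a v]. simpl in *. unfold unifier in Hu.
  rewrite (subst_closed th u cu) in Hu. subst u.
  assert (Cl : closed (subst th a)) by exact (closed_subst_incl th a v Hincl cu).
  destruct Er as [p [_ ->]]. exists (subst th a).
  change (rename p (fact_of (subst th a)) = fact_of (subst th a) /\ in_comp F (subst th a)).
  rewrite rename_fact; auto. split; [reflexivity|]. split; [|split; [auto|split]].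
  - exact (wf_subst_incl th a v Hincl wa wu).
  - exact (height_subst_balanced th a v Hincl _ Bf ha hu).
  - intros s Hs. apply (syms_subst_incl th a v Hincl) in Hs as [Hs|Hs]; [right; apply sa | apply su]; auto.
Qed.

Definition ground (t : term) : term := subst (fun _ => Star) t.

Lemma ground_closed t : closed (ground t).
Proof.
  unfold closed. destruct (vars (ground t)) as [|y l] eqn:E; auto. exfalso.
  assert (Hy : In y (vars (ground t))) by (rewrite E; left; auto).
  apply in_vars_subst in Hy as [x [_ []]].
Qed.

Lemma ground_in_comp F t : bounded_term (wiring_syms F) (wiring_height F) t ->
  in_comp F (ground t).
Proof.
  intros [wt [ht st]]. split; [|split; [apply ground_closed|split]].
  - apply wf_subst; simpl; auto.
  - apply (height_subst_le _ t 0); [lia|].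
    intros x e He. apply occ_depth_le in He. simpl. lia.
  - intros s Hs. apply in_syms_subst in Hs as [Hs|[x [_ [<-|[]]]]]; auto.
Qed.

(* The mgu of [b] with its ground instance sends the variables of [b] to [Star]
   and must fix all other variables. *)
Lemma product_ground_instance a b : exists r, product (a, b) (fact_of (ground b)) r.
Proof.
  set (th := fun x => if in_dec Nat.eq_dec x (vars b) then Star else Var x).
  assert (Eb : subst th b = ground b).
  { apply subst_ext_in. intros x Hx. unfold th. destruct (in_dec Nat.eq_dec x (vars b)); tauto. }
  exists (subst th a, Star), (a, b), (fact_of (ground b)), th.
  split; [apply flow_equiv_refl|]. split; [apply flow_equiv_refl|].
  split; [|split; [split|apply flow_equiv_refl]].
  - intros x _. unfold flow_vars; simpl. rewrite ground_closed. simpl. auto.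
  - unfold unifier. simpl. rewrite Eb, subst_closed; auto. apply ground_closed.
  - intros sg Hsg. exists sg. intros x. unfold th.
    destruct (in_dec Nat.eq_dec x (vars b)) as [Hx|Hx]; auto.
    unfold unifier in Hsg. simpl in Hsg. rewrite (subst_closed sg _ (ground_closed b)) in Hsg.
    apply (subst_ext_in_inv sg (fun _ => Star) b Hsg x Hx).
Qed.

Lemma pow_app_nonempty F n g : is_wiring F -> balanced F -> in_pow F n g ->
  exists u r, in_comp F u /\ in_pow_app F n u r.
Proof.
  intros Hw Hb Hg. destruct g as [a b].
  destruct (in_pow_bounded_balanced F n _ Hw Hb Hg) as [_ [_ Bb]].
  destruct (product_ground_instance a b) as [r Hr].
  exists (ground b), r. split; [apply ground_in_comp; auto|]. exists (a, b); auto.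
Qed.

Theorem mainTheorem6 (F : wiring) :
  is_wiring F -> balanced F ->
  (forall u, in_comp F u ->
     forall r, in_app F u r -> exists t, r = fact_of t /\ in_comp F t) /\
  (forall n : nat,
     (forall u, in_comp F u -> forall r, ~ in_pow_app F n u r) ->
     forall g, ~ in_pow F n g).
Proof.
  intros Hw Hb. split.
  - intros u Hu r Hr. exact (app_in_comp F u r Hw Hb Hu Hr).
  - intros n Hn g Hg.
    destruct (pow_app_nonempty F n g Hw Hb Hg) as [u [r [Hu Hr]]].
    exact (Hn u Hu r Hr).
Qed.
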